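(* Assume (A1). For all $i,j\in I_N$ and $(y,x)\in J_j\times J_i$, $$\mathcal{D}_{\mathrm{junction}}^{ji}(y,x)=\begin{cases}\mathcal{D}_{\mathrm{linear}}^{ji}(y,x)&\text{if }(y,x)\in\Delta^{ji},\\ \mathcal{D}_{\mathrm{implicit}}^{ji}(y,x)&\text{if }(y,x)\in(J_j\times J_i)\setminus\Delta^{ji}.\end{cases}$$
   Context: Junction: fix an integer $N\ge1$ and $N$ distinct unit vectors $e_1,\dots,e_N\in\mathbb{R}^2$. Set $J_i=[0,\infty)e_i$, $J=\bigcup_iJ_i$, $I_N=\{1,\dots,N\}$. Each $x\in J_i$ is written $x=x_ie_i$, $x_i\ge0$. For a function $f$ on $J\times J$ (variables $(y,x)$), $f^{ji}$ denotes its restriction to $J_j\times J_i$. (A1): there is $\gamma>0$ with $L_i\in C^2(\mathbb{R})$, $L_i''\ge\gamma$ for each $i$. $L_0(0)=\min_jL_j(0)$, $I_0=\{l: L_l(0)=L_0(0)\}$. $K_l(\xi)=L_l(\xi)-\xi L_l'(\xi)-L_0(0)$; $\xi_l^-\le0$ (resp. $\xi_l^+\ge0$) is the unique zero of $K_l$ on $(-\infty,0]$ (resp. $[0,\infty)$); these are $0$ iff $l\in I_0$. For $\tau\in[0,1]$: $\mathcal{E}_1(\tau,y)=\tau L_j(-y_j/\tau)-\tau L_0(0)$ if $y=y_je_j\ne0$, $\tau\ne0$; $\mathcal{E}_1(\tau,0)=0$; $\mathcal{E}_1(0,y)=+\infty$ if $y\ne0$. $\mathcal{E}_2(\tau,x)=(1-\tau)L_i(x_i/(1-\tau))+\tau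 L_0(0)$ if $x=x_ie_i\ne0$, $\tau\ne1$; $\mathcal{E}_2(\tau,0)=L_0(0)$; $\mathcal{E}_2(1,x)=+\infty$ if $x\ne0$. Define $\mathcal{D}_{\mathrm{junction}}(y,x)=\inf_{0\le\tau_1\le\tau_2\le1}\{\mathcal{E}_1(\tau_1,y)+\mathcal{E}_2(\tau_2,x)\}$ and $\mathcal{D}_{\mathrm{implicit}}(y,x)=\inf_{0\le\tau\le1}\{\mathcal{E}_1(\tau,y)+\mathcal{E}_2(\tau,x)\}$. For $(y,x)\in J_j\times J_i$: $\mathcal{D}_{\mathrm{linear}}^{ji}(y,x)=-L_j'(\xi_j^-)y_j+L_i'(\xi_i^+)x_i+L_0(0)$. If $i,j\notin I_0$, $\Delta^{ji}=\{(y,x)\in J_j\times J_i: x_i/\xi_i^+-y_j/\xi_j^-<1\}$; if $i\in I_0$ or $j\in I_0$, $\Delta^{ji}=\emptyset$. *)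

From Stdlib Require Import Reals.
Open Scope R_scope.

(* A point of the branch J_i is identified with its coordinate x_i >= 0
   (x = x_i e_i).  Extended-real values (+infinity) are encoded by [None]. *)

Definition E1 (L : nat -> R -> R) (L0 : R) (j : nat) (tau y : R) : option R :=
  if Req_EM_T y 0 then Some 0
  else if Req_EM_T tau 0 then None
  else Some (tau * L j (- y / tau) - tau * L0).

Definition E2 (L : nat -> R -> R) (L0 : R) (i : nat) (tau x : R) : option R :=
  if Req_EM_T x 0 then Some L0
  else if Req_EM_T tau 1 then None
  else Some ((1 - tau) * L i (x / (1 - tau)) + tau * L0).

(* finite values of the function whose infimum defines D_junction *)
Definition Djunction_set (L : nat -> R -> R) (L0 : R) (j i : nat) (y x : R)
  : R -> Prop :=
  fun r => exists t1 t2 a b, 0 <= t1 <= t2 /\ t2 <= 1 /\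
    E1 L L0 j t1 y = Some a /\ E2 L L0 i t2 x = Some b /\ r = a + b.

(* finite values of the function whose infimum defines D_implicit *)
Definition Dimplicit_set (L : nat -> R -> R) (L0 : R) (j i : nat) (y x : R)
  : R -> Prop :=
  fun r => exists t a b, 0 <= t <= 1 /\
    E1 L L0 j t y = Some a /\ E2 L L0 i t x = Some b /\ r = a + b.

Definition is_inf (S : R -> Prop) (v : R) : Prop :=
  (forall r, S r -> v <= r) /\ (forall m, (forall r, S r -> m <= r) -> m <= v).

Definition Kfun (L dL : nat -> R -> R) (L0 : R) (l : nat) (xi : R) : R :=
  L l xi - xi * dL l xi - L0.

Definition Dlinear (dL : nat -> R -> R) (L0 : R) (xim xip : nat -> R)
  (j i : nat) (y x : R) : R :=
  - dL j (xim j) * y + dL i (xip i) * x + L0.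

(* (y,x) in Delta^{ji}; empty when i or j is in I_0 *)
Definition inDelta (L : nat -> R -> R) (L0 : R) (xim xip : nat -> R)
  (j i : nat) (y x : R) : Prop :=
  L j 0 <> L0 /\ L i 0 <> L0 /\ x / xip i - y / xim j < 1.

(* Every branch Lagrangian L_l is convex (L_l'' >= gamma > 0), hence lies
   above its tangent lines.  Writing K_l(p) = L_l(p) - p L_l'(p) - L0, the
   perspective s (L_l(z/s) - L0) is bounded below by s K_l(p) + L_l'(p) z for
   every slope p, with equality at p = z/s.  Three consequences drive the
   proof:
   - at a zero p of K_l the bound is linear in z, so D_linear is a lower bound
     of every value E1(t1,y) + E2(t2,x) (tangents at xi_j^- and xi_i^+);
   - on Delta^{ji} the times t1 = y/(-xi_j^-), t2 = 1 - x/xi_i^+ are ordered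
     and realise that bound, so D_junction = D_linear;
   - where K_l <= 0 the perspective is nonincreasing in s, which lets one
     merge t1 <= t2 into a single time without increasing the cost; outside
     Delta^{ji} such a merge always exists, so D_junction = D_implicit. *)

From Stdlib Require Import Reals Lra Psatz.
(* imported after Reals, whose exponential series is also named E1 *)
Open Scope R_scope.

Lemma is_inf_exists (S : R -> Prop) :
  (exists r, S r) -> (exists m, forall r, S r -> m <= r) -> exists v, is_inf S v.
Proof.
  intros [r0 Hr0] [m Hm].
  destruct (completeness (fun r => S (- r))) as [v [Hub Hlub]].
  - exists (- m). intros r Hr. specialize (Hm _ Hr). lra.
  - exists (- r0). now rewrite Ropp_involutive.
  - exists (- v). split.
    + intros r Hr.
      assert (Hneg : S (- - r)) by now rewrite Ropp_involutive.
      specialize (Hub _ Hneg). lra.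
    + intros m' Hm'. assert (v <= - m'); [|lra].
      apply Hlub. intros r Hr. specialize (Hm' _ Hr). lra.
Qed.

Lemma is_inf_attained (S : R -> Prop) (v : R) :
  (forall r, S r -> v <= r) -> S v -> is_inf S v.
Proof. intros Hlb Hv. split; [exact Hlb|]. intros m Hm. now apply Hm. Qed.

Lemma is_inf_dominated (S T : R -> Prop) (v : R) :
  is_inf S v -> (forall r, S r -> T r) ->
  (forall r, T r -> exists r', S r' /\ r' <= r) -> is_inf T v.
Proof.
  intros [Hlb Hglb] Hsub Hdom. split.
  - intros r Hr. destruct (Hdom r Hr) as [r' [Hr' Hle]]. specialize (Hlb _ Hr'). lra.
  - intros m Hm. apply Hglb. intros r Hr. now apply Hm, Hsub.
Qed.

Section Convexity.
Variables f f' f'' : R -> R.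
Hypothesis f_deriv : forall z, derivable_pt_lim f z (f' z).
Hypothesis f'_deriv : forall z, derivable_pt_lim f' z (f'' z).
Hypothesis f''_nonneg : forall z, 0 <= f'' z.

Lemma derivative_nondecreasing p q : p <= q -> f' p <= f' q.
Proof.
  intros Hpq. destruct (Req_dec p q) as [->|Hne]; [lra|].
  destruct (MVT_cor2 f' f'' p q) as [c [Hc _]]; [lra| intros; apply f'_deriv|].
  specialize (f''_nonneg c). nra.
Qed.

Lemma tangent_line_below p q : f p + f' p * (q - p) <= f q.
Proof.
  destruct (Rtotal_order p q) as [H|[->|H]].
  - destruct (MVT_cor2 f f' p q) as [c [Hc Hc2]]; [lra| intros; apply f_deriv|].
    assert (f' p <= f' c) by (apply derivative_nondecreasing; lra). nra.
  - lra.
  - destruct (MVT_cor2 f f' q p) as [c [Hc Hc2]]; [lra| intros; apply f_deriv|].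
    assert (f' c <= f' p) by (apply derivative_nondecreasing; lra). nra.
Qed.

End Convexity.

Lemma E1_cases L L0 j t y a : E1 L L0 j t y = Some a ->
  (y = 0 /\ a = 0) \/ (y <> 0 /\ t <> 0 /\ a = t * L j (- y / t) - t * L0).
Proof.
  unfold E1. destruct (Req_EM_T y 0); [intro H; inversion H; auto|].
  destruct (Req_EM_T t 0); [discriminate|]. intro H; inversion H; auto.
Qed.

Lemma E1_origin L L0 j t : E1 L L0 j t 0 = Some 0.
Proof. unfold E1. destruct (Req_EM_T 0 0); [auto|lra]. Qed.

Lemma E1_finite L L0 j t y : y <> 0 -> t <> 0 ->
  E1 L L0 j t y = Some (t * L j (- y / t) - t * L0).
Proof.
  intros. unfold E1. destruct (Req_EM_T y 0); [lra|].
  destruct (Req_EM_T t 0); [lra|auto].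
Qed.

Lemma E2_cases L L0 i t x b : E2 L L0 i t x = Some b ->
  (x = 0 /\ b = L0) \/ (x <> 0 /\ t <> 1 /\ b = (1 - t) * L i (x / (1 - t)) + t * L0).
Proof.
  unfold E2. destruct (Req_EM_T x 0); [intro H; inversion H; auto|].
  destruct (Req_EM_T t 1); [discriminate|]. intro H; inversion H; auto.
Qed.

Lemma E2_origin L L0 i t : E2 L L0 i t 0 = Some L0.
Proof. unfold E2. destruct (Req_EM_T 0 0); [auto|lra]. Qed.

Lemma E2_finite L L0 i t x : x <> 0 -> t <> 1 ->
  E2 L L0 i t x = Some ((1 - t) * L i (x / (1 - t)) + t * L0).
Proof.
  intros. unfold E2. destruct (Req_EM_T x 0); [lra|].
  destruct (Req_EM_T t 1); [lra|auto].
Qed.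

Section Branch.
Variables (L dL : nat -> R -> R) (L0 : R) (l : nat).
Hypothesis tangent : forall p q, L l p + dL l p * (q - p) <= L l q.

Local Notation K := (Kfun L dL L0 l).

Lemma perspective_lower_bound s z p :
  0 < s -> s * K p + dL l p * z <= s * (L l (z / s) - L0).
Proof.
  intros Hs. unfold Kfun. pose proof (tangent p (z / s)) as Ht.
  assert (Hz : s * (z / s) = z) by (field; lra).
  assert (Hm : s * (L l p + dL l p * (z / s - p)) <= s * L l (z / s))
    by (apply Rmult_le_compat_l; lra).
  replace (s * (L l p + dL l p * (z / s - p)))
    with (s * L l p + dL l p * (s * (z / s)) - s * p * dL l p) in Hm by ring.
  rewrite Hz in Hm. lra.
Qed.

Lemma perspective_at_slope s z :
  0 < s -> s * (L l (z / s) - L0) = s * K (z / s) + dL l (z / s) * z.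
Proof. intros Hs. unfold Kfun. field. lra. Qed.

Lemma K_compare p xi : K p <= K xi + xi * (dL l xi - dL l p).
Proof. unfold Kfun. pose proof (tangent p xi). nra. Qed.

Lemma K_nonpos_minimal p : L l 0 = L0 -> K p <= 0.
Proof.
  intros H0. pose proof (K_compare p 0) as Hc. unfold Kfun in *. rewrite H0 in Hc. lra.
Qed.

Lemma E1_lower_bound p t y a :
  K p = 0 -> 0 <= t -> E1 L L0 l t y = Some a -> - dL l p * y <= a.
Proof.
  intros HK Ht HE.
  destruct (E1_cases _ _ _ _ _ _ HE) as [[-> ->]|[Hy [Ht0 ->]]]; [lra|].
  pose proof (perspective_lower_bound t (- y) p ltac:(lra)) as Hb.
  rewrite HK in Hb. lra.
Qed.

Lemma E2_lower_bound p t x b :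
  K p = 0 -> t <= 1 -> E2 L L0 l t x = Some b -> dL l p * x + L0 <= b.
Proof.
  intros HK Ht HE.
  destruct (E2_cases _ _ _ _ _ _ HE) as [[-> ->]|[Hx [Ht0 ->]]]; [lra|].
  pose proof (perspective_lower_bound (1 - t) x p ltac:(lra)) as Hb.
  rewrite HK in Hb. lra.
Qed.

(* Monotonicity of the perspective: with p = -y/t, E1(t1) - E1(t) is at
   least (t1 - t) K(p), which is nonnegative when t1 <= t and K(p) <= 0. *)
Lemma E1_decrease t1 t y a :
  0 <= t1 <= t -> E1 L L0 l t1 y = Some a -> (y = 0 \/ K (- y / t) <= 0) ->
  exists a', E1 L L0 l t y = Some a' /\ a' <= a.
Proof.
  intros Ht HE HK.
  destruct (E1_cases _ _ _ _ _ _ HE) as [[-> ->]|[Hy [Ht0 ->]]].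
  - exists 0. now split; [apply E1_origin|lra].
  - exists (t * L l (- y / t) - t * L0). split; [now apply E1_finite; lra|].
    destruct HK as [Hy0|HK]; [contradiction|].
    pose proof (perspective_lower_bound t1 (- y) (- y / t) ltac:(lra)).
    pose proof (perspective_at_slope t (- y) ltac:(lra)).
    nra.
Qed.

Lemma E2_decrease t t2 x b :
  0 <= t <= t2 -> t2 <= 1 -> E2 L L0 l t2 x = Some b ->
  (x = 0 \/ K (x / (1 - t)) <= 0) ->
  exists b', E2 L L0 l t x = Some b' /\ b' <= b.
Proof.
  intros Ht Ht2 HE HK.
  destruct (E2_cases _ _ _ _ _ _ HE) as [[-> ->]|[Hx [Ht0 ->]]].
  - exists L0. now split; [apply E2_origin|lra].
  - exists ((1 - t) * L l (x / (1 - t)) + t * L0). split; [now apply E2_finite; lra|].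
    destruct HK as [Hx0|HK]; [contradiction|].
    pose proof (perspective_lower_bound (1 - t2) x (x / (1 - t)) ltac:(lra)).
    pose proof (perspective_at_slope (1 - t) x ltac:(lra)).
    nra.
Qed.

Lemma E1_at_root xi y :
  xi < 0 -> K xi = 0 -> 0 <= y -> E1 L L0 l (y / - xi) y = Some (- dL l xi * y).
Proof.
  intros Hxi HK Hy. destruct (Req_dec y 0) as [->|Hy0].
  - rewrite E1_origin. f_equal. ring.
  - assert (Hslope : - y / (y / - xi) = xi) by (field; lra).
    assert (Ht : 0 < y / - xi) by (apply Rdiv_lt_0_compat; lra).
    rewrite E1_finite, Hslope by lra.
    f_equal. replace (L l xi) with (K xi + xi * dL l xi + L0) by (unfold Kfun; ring).
    rewrite HK. field. lra.
Qed.

Lemma E2_at_root xi x :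
  0 < xi -> K xi = 0 -> 0 <= x ->
  E2 L L0 l (1 - x / xi) x = Some (dL l xi * x + L0).
Proof.
  intros Hxi HK Hx. destruct (Req_dec x 0) as [->|Hx0].
  - rewrite E2_origin. f_equal. ring.
  - assert (Hslope : x / (1 - (1 - x / xi)) = xi) by (field; lra).
    assert (Ht : 1 - x / xi <> 1) by (intro H; assert (x / xi = 0) by lra;
      apply Hx0; apply (Rmult_eq_reg_r (/ xi)); [lra|apply Rinv_neq_0_compat; lra]).
    rewrite E2_finite, Hslope by assumption.
    f_equal. replace (L l xi) with (K xi + xi * dL l xi + L0) by (unfold Kfun; ring).
    rewrite HK. field. lra.
Qed.

Hypothesis dL_mono : forall p q, p <= q -> dL l p <= dL l q.

Lemma K_nonpos_left xi p : xi <= 0 -> K xi = 0 -> p <= xi -> K p <= 0.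
Proof.
  intros Hxi HK Hp. pose proof (K_compare p xi). pose proof (dL_mono p xi Hp). nra.
Qed.

Lemma K_nonpos_right xi p : 0 <= xi -> K xi = 0 -> xi <= p -> K p <= 0.
Proof.
  intros Hxi HK Hp. pose proof (K_compare p xi). pose proof (dL_mono xi p Hp). nra.
Qed.

End Branch.

Lemma K_root_nonzero (L dL : nat -> R -> R) L0 l xi :
  L l 0 <> L0 -> Kfun L dL L0 l xi = 0 -> xi <> 0.
Proof. intros Hne HK ->. apply Hne. unfold Kfun in HK. lra. Qed.

Section JunctionCost.
Variables (L dL : nat -> R -> R) (L0 : R) (xim xip : nat -> R) (j i : nat) (y x : R).
Hypotheses (y_nonneg : 0 <= y) (x_nonneg : 0 <= x).
Hypothesis tangent_j : forall p q, L j p + dL j p * (q - p) <= L j q.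
Hypothesis tangent_i : forall p q, L i p + dL i p * (q - p) <= L i q.
Hypothesis mono_j : forall p q, p <= q -> dL j p <= dL j q.
Hypothesis mono_i : forall p q, p <= q -> dL i p <= dL i q.
Hypotheses (xim_nonpos : xim j <= 0) (K_xim : Kfun L dL L0 j (xim j) = 0).
Hypotheses (xip_nonneg : 0 <= xip i) (K_xip : Kfun L dL L0 i (xip i) = 0).

Local Notation Dlin := (Dlinear dL L0 xim xip j i y x).
Local Notation Djunc := (Djunction_set L L0 j i y x).
Local Notation Dimpl := (Dimplicit_set L L0 j i y x).

Lemma Dimplicit_intro t a b :
  0 <= t <= 1 -> E1 L L0 j t y = Some a -> E2 L L0 i t x = Some b -> Dimpl (a + b).
Proof. intros. now exists t, a, b. Qed.

Lemma Dimplicit_in_Djunction r : Dimpl r -> Djunc r.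
Proof. intros [t [a [b [Ht [Ea [Eb ->]]]]]]. exists t, t, a, b. split; [lra|]. split; [lra|]. auto. Qed.

Lemma Dimplicit_nonempty : exists r, Dimpl r.
Proof.
  assert (Ea : exists a, E1 L L0 j (1 / 2) y = Some a).
  { destruct (Req_dec y 0) as [->|Hy0]; eexists; [apply E1_origin|apply E1_finite; lra]. }
  assert (Eb : exists b, E2 L L0 i (1 / 2) x = Some b).
  { destruct (Req_dec x 0) as [->|Hx0]; eexists; [apply E2_origin|apply E2_finite; lra]. }
  destruct Ea as [a Ea], Eb as [b Eb].
  exists (a + b). apply (Dimplicit_intro (1 / 2)); auto; lra.
Qed.

Lemma Dlinear_lower_bound r : Djunc r -> Dlin <= r.
Proof.
  intros [t1 [t2 [a [b [H1 [H2 [Ea [Eb ->]]]]]]]]. unfold Dlinear.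
  pose proof (E1_lower_bound L dL L0 j tangent_j (xim j) t1 y a K_xim ltac:(lra) Ea).
  pose proof (E2_lower_bound L dL L0 i tangent_i (xip i) t2 x b K_xip H2 Eb).
  lra.
Qed.

Lemma Dlinear_attained : inDelta L L0 xim xip j i y x -> Djunc Dlin.
Proof.
  intros [Hj0 [Hi0 HD]].
  assert (Hm : xim j < 0)
    by (pose proof (K_root_nonzero L dL L0 j _ Hj0 K_xim); lra).
  assert (Hp : 0 < xip i)
    by (pose proof (K_root_nonzero L dL L0 i _ Hi0 K_xip); lra).
  assert (Hx_ratio : 0 <= x / xip i)
    by (apply Rmult_le_pos; [lra|left; apply Rinv_0_lt_compat; lra]).
  assert (Hy_ratio : 0 <= y / - xim j)
    by (apply Rmult_le_pos; [lra|left; apply Rinv_0_lt_compat; lra]).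
  rewrite Rdiv_opp_r in Hy_ratio.
  exists (y / - xim j), (1 - x / xip i), (- dL j (xim j) * y), (dL i (xip i) * x + L0).
  split; [rewrite Rdiv_opp_r; lra|].
  split; [lra|].
  split; [now apply E1_at_root|].
  split; [now apply E2_at_root|].
  unfold Dlinear. ring.
Qed.

(* The interior case of the merging argument: when K is positive at both
   slopes, both branches are outside I_0, and leaving Delta^{ji} places the
   root time s = y/(-xi_j^-) between t1 and t2 with x/(1-s) >= xi_i^+;
   both times can then be moved to s. *)
Lemma merge_times_interior t1 t2 a b :
  ~ inDelta L L0 xim xip j i y x -> 0 <= t1 <= t2 -> t2 <= 1 ->
  E1 L L0 j t1 y = Some a -> E2 L L0 i t2 x = Some b -> y <> 0 -> x <> 0 ->
  0 < Kfun L dL L0 j (- y / t2) -> 0 < Kfun L dL L0 i (x / (1 - t1)) ->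
  exists r, Dimpl r /\ r <= a + b.
Proof.
  intros HnD H1 H2 Ea Eb Hy0 Hx0 K1 K2.
  assert (Hj0 : L j 0 <> L0)
    by (intro H; pose proof (K_nonpos_minimal L dL L0 j tangent_j (- y / t2) H); lra).
  assert (Hi0 : L i 0 <> L0)
    by (intro H; pose proof (K_nonpos_minimal L dL L0 i tangent_i (x / (1 - t1)) H); lra).
  assert (Hm : xim j < 0) by (pose proof (K_root_nonzero L dL L0 j _ Hj0 K_xim); lra).
  assert (Hp : 0 < xip i) by (pose proof (K_root_nonzero L dL L0 i _ Hi0 K_xip); lra).
  destruct (E1_cases _ _ _ _ _ _ Ea) as [[? _]|[_ [Ht1 _]]]; [lra|].
  destruct (E2_cases _ _ _ _ _ _ Eb) as [[? _]|[_ [Ht2 _]]]; [lra|].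
  assert (Hslope_j : xim j < - y / t2).
  { destruct (Rlt_le_dec (xim j) (- y / t2)) as [?|Hle]; [auto|].
    pose proof (K_nonpos_left L dL L0 j tangent_j mono_j _ _ xim_nonpos K_xim Hle). lra. }
  assert (Hslope_i : x / (1 - t1) < xip i).
  { destruct (Rlt_le_dec (x / (1 - t1)) (xip i)) as [?|Hle]; [auto|].
    pose proof (K_nonpos_right L dL L0 i tangent_i mono_i _ _ xip_nonneg K_xip Hle). lra. }
  assert (Hout : 1 <= x / xip i - y / xim j).
  { destruct (Rle_dec 1 (x / xip i - y / xim j)) as [?|Hlt]; [auto|].
    exfalso. apply HnD. repeat split; auto. lra. }
  set (s := y / - xim j).
  assert (Hs_t2 : s < t2).
  { unfold s. apply (Rmult_lt_reg_r (- xim j)); [lra|].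
    replace (y / - xim j * - xim j) with y by (field; lra).
    apply (Rmult_lt_compat_r t2) in Hslope_j; [|lra].
    replace (- y / t2 * t2) with (- y) in Hslope_j by (field; lra). lra. }
  assert (Hx_t1 : x / xip i < 1 - t1).
  { apply (Rmult_lt_reg_r (xip i)); [lra|].
    replace (x / xip i * xip i) with x by (field; lra).
    apply (Rmult_lt_compat_r (1 - t1)) in Hslope_i; [|lra].
    replace (x / (1 - t1) * (1 - t1)) with x in Hslope_i by (field; lra). lra. }
  assert (Hs_lower : 1 - x / xip i <= s) by (unfold s; rewrite Rdiv_opp_r; lra).
  destruct (E1_decrease L dL L0 j tangent_j t1 s y a ltac:(lra) Ea) as [a' [Ea' Ha']].
  { right. replace (- y / s) with (xim j) by (unfold s; field; split; lra). lra. }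
  destruct (E2_decrease L dL L0 i tangent_i s t2 x b ltac:(lra) H2 Eb) as [b' [Eb' Hb']].
  { right. apply (K_nonpos_right L dL L0 i tangent_i mono_i (xip i)); auto.
    apply (Rmult_le_reg_r (1 - s)); [lra|].
    replace (x / (1 - s) * (1 - s)) with x by (field; lra).
    assert (Hx_eq : x / xip i * xip i = x) by (field; lra).
    apply (Rmult_le_compat_r (xip i)) in Hs_lower; [|lra].
    nra. }
  exists (a' + b'). split; [|lra]. apply (Dimplicit_intro s); auto. lra.
Qed.

(* Outside Delta^{ji}, every junction value dominates an implicit one:
   either one of the two times can be moved onto the other, or the interior
   case applies. *)
Lemma Djunction_dominated r :
  ~ inDelta L L0 xim xip j i y x -> Djunc r -> exists r', Dimpl r' /\ r' <= r.
Proof.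
  intros HnD [t1 [t2 [a [b [H1 [H2 [Ea [Eb ->]]]]]]]].
  destruct (Req_dec y 0) as [Hy0|Hy0];
    [|destruct (Rle_dec (Kfun L dL L0 j (- y / t2)) 0) as [K1|K1]].
  1,2: destruct (E1_decrease L dL L0 j tangent_j t1 t2 y a H1 Ea) as [a' [Ea' Ha']];
    [tauto|exists (a' + b); split; [apply (Dimplicit_intro t2)|]; auto; lra].
  destruct (Req_dec x 0) as [Hx0|Hx0];
    [|destruct (Rle_dec (Kfun L dL L0 i (x / (1 - t1))) 0) as [K2|K2]].
  1,2: destruct (E2_decrease L dL L0 i tangent_i t1 t2 x b ltac:(lra) H2 Eb) as [b' [Eb' Hb']];
    [tauto|exists (a + b'); split; [apply (Dimplicit_intro t1)|]; auto; lra].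
  apply (merge_times_interior t1 t2); auto; lra.
Qed.

End JunctionCost.

Theorem mainTheorem17 :
  forall (N : nat), (1 <= N)%nat ->
  forall (L dL d2L : nat -> R -> R) (gamma : R), 0 < gamma ->
  (forall i, (1 <= i <= N)%nat -> forall z,
      derivable_pt_lim (L i) z (dL i z) /\
      derivable_pt_lim (dL i) z (d2L i z) /\
      continuity_pt (d2L i) z /\ gamma <= d2L i z) ->
  forall L0 : R,
  (exists j, (1 <= j <= N)%nat /\ L j 0 = L0) ->
  (forall j, (1 <= j <= N)%nat -> L0 <= L j 0) ->
  forall xim xip : nat -> R,
  (forall l, (1 <= l <= N)%nat ->
      xim l <= 0 /\ Kfun L dL L0 l (xim l) = 0 /\
      0 <= xip l /\ Kfun L dL L0 l (xip l) = 0) ->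
  forall i j, (1 <= i <= N)%nat -> (1 <= j <= N)%nat ->
  forall y x : R, 0 <= y -> 0 <= x ->
  (inDelta L L0 xim xip j i y x ->
     is_inf (Djunction_set L L0 j i y x) (Dlinear dL L0 xim xip j i y x)) /\
  (~ inDelta L L0 xim xip j i y x ->
     exists v, is_inf (Djunction_set L L0 j i y x) v /\
               is_inf (Dimplicit_set L L0 j i y x) v).
Proof.
  intros N _ L dL d2L gamma Hgamma HA1 L0 _ _ xim xip Hxi i j Hi Hj y x Hy Hx.
  assert (Hconv : forall l, (1 <= l <= N)%nat ->
            (forall p q, L l p + dL l p * (q - p) <= L l q) /\
            (forall p q, p <= q -> dL l p <= dL l q)).
  { intros l Hl. split; [apply (tangent_line_below (L l) (dL l) (d2L l))
                        |apply (derivative_nondecreasing (dL l) (d2L l))];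
      intro z; destruct (HA1 l Hl z) as [? [? [_ ?]]]; auto; lra. }
  destruct (Hconv j Hj) as [Tj Mj], (Hconv i Hi) as [Ti Mi].
  destruct (Hxi j Hj) as [Hjm [HKjm _]], (Hxi i Hi) as [_ [_ [Hip HKip]]].
  split.
  - intros HD. apply is_inf_attained.
    + intro r. now apply Dlinear_lower_bound.
    + now apply Dlinear_attained.
  - intros HnD.
    destruct (is_inf_exists (Dimplicit_set L L0 j i y x)) as [v Hv].
    + now apply Dimplicit_nonempty.
    + exists (Dlinear dL L0 xim xip j i y x). intros r Hr.
      eapply Dlinear_lower_bound; eauto. now apply Dimplicit_in_Djunction.
    + exists v. split; [|exact Hv].
      apply (is_inf_dominated _ _ _ Hv).
      * apply Dimplicit_in_Djunction.
      * intros r Hr. now apply (Djunction_dominated L dL L0 xim xip j i y x).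
Qed.
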